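(* Let $2 \le m \le n$ and $1 \le h \le k \le m$. Let $P$ be a nonzero orthogonal projection on $\mathcal{H}_n\otimes\mathcal{H}_m$. Then \[ \|P\|_{S(k)} \ge \Big(1 - \frac{k-h}{m-1}\Big)\|P\|_{S(h)} + \frac{k-h}{m-1}. \]
   Context: $\mathcal{H}_d = \mathbb{C}^d$ and $m\le n$. $SR$ denotes Schmidt rank, i.e. the number of nonzero singular values of the coefficient matrix of a vector in $\mathcal{H}_n\otimes\mathcal{H}_m$. For $1\le k\le m$, \[ \|X\|_{S(k)} := \sup\{|\langle w|X|v\rangle| : |v\rangle,|w\rangle \text{ unit vectors}, SR(|v\rangle),SR(|w\rangle)\le k\}. \] *)

From HB Require Import structures.
From mathcomp Require Import all_boot all_order all_algebra.
From mathcomp Require Import complex.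
From mathcomp Require Import all_classical all_reals.
Set Implicit Arguments. Unset Strict Implicit. Unset Printing Implicit Defensive.
Import Order.TTheory GRing.Theory Num.Theory.
Local Open Scope ring_scope.
Local Open Scope classical_set_scope.

(* Complex numbers C = R[i] over a real field R (realType, for suprema).
   H_n (x) H_m = C^(n*m); a vector is a column 'cV[R[i]]_(n*m), with the
   basis vector e_i (x) f_j at index mxvec_index i j. *)

Definition cabs (R : rcfType) (z : R[i]) : R := ComplexField.Normc.normc z.

Definition adj (R : rcfType) (p q : nat) (A : 'M[R[i]]_(p, q)) : 'M[R[i]]_(q, p) :=
  \matrix_(i, j) conjc (A j i).

Definition dotC (R : rcfType) (d : nat) (w v : 'cV[R[i]]_d) : R[i] :=
  (adj w *m v) 0 0.

Definition unit_vec (R : rcfType) (d : nat) (v : 'cV[R[i]]_d) : Prop :=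
  dotC v v = 1.

(* coefficient matrix of v in H_n (x) H_m : the n x m matrix (v_{ij}) *)
Definition coef_mx (R : rcfType) (n m : nat) (v : 'cV[R[i]]_(n * m)) : 'M[R[i]]_(n, m) :=
  vec_mx (v^T).

Definition SR (R : rcfType) (n m : nat) (v : 'cV[R[i]]_(n * m)) : nat :=
  \rank (coef_mx v).

Definition normS (R : realType) (n m k : nat) (X : 'M[R[i]]_(n * m)) : R :=
  sup [set r : R | exists (v w : 'cV[R[i]]_(n * m)),
         [/\ unit_vec v, unit_vec w, (SR v <= k)%N, (SR w <= k)%N &
             r = cabs ((adj w *m X *m v) 0 0)]].

Definition orth_proj (R : rcfType) (d : nat) (P : 'M[R[i]]_d) : Prop :=
  P *m P = P /\ adj P = P.

From HB Require Import structures.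
From mathcomp Require Import all_boot all_order all_algebra.
From mathcomp Require Import complex.
From mathcomp Require Import all_classical all_reals.
From mathcomp Require Import spectral sesquilinear.
From mathcomp Require Import lra zify.
Import Order.TTheory GRing.Theory Num.Theory.
Local Open Scope ring_scope.
Local Open Scope sesquilinear_scope.
Set Implicit Arguments. Unset Strict Implicit. Unset Printing Implicit Defensive.

(* Write the vectors of H_n (x) H_m as their n x m coefficient matrices, so
   that Schmidt rank is matrix rank and the inner product is the Frobenius one.
   Fix a unit vector y of Schmidt rank at most h and let x be the normalized
   P y, so that |<y, x>|^2 = |P y|^2.  Choose a unitary change of basis of H_m
   making the coefficient matrix Y of y supported on its first q <= h columns,
   and let w_j be the weight of the coefficient matrix X of x on column j:
   |<Y, X>|^2 <= s := sum_(j < q) w_j by Cauchy-Schwarz, and the remaining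
   columns carry 1 - s, so some k - h of them carry at least a fraction
   (k - h)/(m - q) >= (k - h)/(m - 1) of it.  Compressing X to these k columns
   gives a Schmidt-rank-k vector v with <v|P|v> at least their total weight,
   whence ||P||_S(k) >= (1 - t) |P y|^2 + t for t = (k - h)/(m - 1).  Finally
   |<w|P|v>| <= max(|P v|^2, |P w|^2) for unit v, w, and taking the supremum
   over v, w of Schmidt rank at most h gives the bound. *)

Lemma exists_subset_ge_avg (R : realDomainType) (I : finType) (a : I -> R)
    (S : {set I}) l :
  (l <= #|S|)%N -> exists2 T : {set I}, T \subset S &
    #|T| = l /\ l%:R * \sum_(i in S) a i <= #|S|%:R * \sum_(i in T) a i.
Proof.
have [-> _|l_gt0] := posnP l.
  by exists finset.set0; rewrite ?finset.sub0set ?cards0 // big_set0 mulr0 mul0r.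
move cardS: #|S| => N; elim: N S cardS => [|N IH] S cardS le_lN.
  by rewrite leqn0 in le_lN; rewrite (eqP le_lN) in l_gt0.
have [->|ne_lN] := eqVneq l N.+1; first by exists S.
have le_lN' : (l <= N)%N by rewrite -ltnS ltn_neqAle ne_lN le_lN.
have [x0 x0S] : exists x, x \in S by apply/finset.set0Pn; rewrite -card_gt0 cardS.
have [x xS xmin] : exists2 x, x \in S & forall y, y \in S -> a x <= a y.
  by case: (arg_minP a x0S) => x xS xmin; exists x.
have cardS' : #|S :\ x| = N by move: cardS; rewrite (cardsD1 x) xS add1n => -[].
have [T sT [cardT avgT]] := IH _ cardS' le_lN'.
exists T; first exact: fintype.subset_trans sT (finset.subsetDl _ _).
split => //; rewrite (big_setD1 x xS) /=.
(* x has minimal weight, hence at most the average weight on S :\ x *)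
have min_le : N%:R * a x <= \sum_(i in S :\ x) a i.
  rewrite mulr_natl -cardS' -sumr_const.
  by apply: ler_sum => i /setD1P[_ /xmin].
have N_gt0 : 0 < N%:R :> R by rewrite ltr0n (leq_trans l_gt0).
have e1 := ler_wpM2l (ler0n R l) min_le.
have e2 := ler_wpM2l (ler0n R N.+1) avgT.
rewrite -(ler_pM2l N_gt0) -natr1; rewrite -natr1 in e2; nra.
Qed.

Lemma sup_affine_le (R : realType) (E : set R) (a b z : R) :
  (E !=set0)%classic -> 0 <= a -> (forall r, E r -> a * r + b <= z) -> a * sup E + b <= z.
Proof.
move=> [r0 Er0] a_ge0 bnd.
have [a0|a_ne0] := eqVneq a 0; first by have := bnd r0 Er0; rewrite a0 !mul0r.
have a_gt0 : 0 < a by rewrite lt_def a_ne0.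
suff : sup E <= (z - b) / a by rewrite ler_pdivlMr // => ?; lra.
apply: ge_sup; first by exists r0.
by move=> r Er; rewrite ler_pdivlMr //; have := bnd r Er; lra.
Qed.

Section Frobenius.
Context {R : rcfType}.
Local Notation C := R[i].

Lemma trmxC_mul p q r (A : 'M[C]_(p, q)) (B : 'M[C]_(q, r)) :
  (A *m B)^t* = B^t* *m A^t*.
Proof. by rewrite trmx_mul map_mxM. Qed.

Definition frob p q (X Y : 'M[C]_(p, q)) : C := \tr (X *m Y^t*).

Lemma frobE p q (X Y : 'M[C]_(p, q)) :
  frob X Y = \sum_i \sum_j X i j * (Y i j)^*.
Proof.
rewrite /frob /mxtrace; apply: eq_bigr => i _; rewrite mxE.
by apply: eq_bigr => j _; rewrite !mxE.
Qed.

Lemma frob_mulmxr p q r (X : 'M[C]_(p, q)) (A : 'M[C]_(q, r)) Y :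
  frob (X *m A) Y = frob X (Y *m A^t*).
Proof. by rewrite /frob trmxC_mul trmxCK mulmxA. Qed.

Lemma frob_mulmxl p q r (A : 'M[C]_(p, q)) (X : 'M[C]_(q, r)) Y :
  frob (A *m X) Y = frob X (A^t* *m Y).
Proof. by rewrite /frob trmxC_mul trmxCK -mulmxA mxtrace_mulC mulmxA. Qed.

Lemma frobC p q (X Y : 'M[C]_(p, q)) : frob Y X = (frob X Y)^*.
Proof.
rewrite !frobE rmorph_sum; apply: eq_bigr => i _; rewrite rmorph_sum.
by apply: eq_bigr => j _; rewrite rmorphM /= conjCK mulrC.
Qed.

Lemma frobZl p q a (X Y : 'M[C]_(p, q)) : frob (a *: X) Y = a * frob X Y.
Proof. by rewrite /frob -scalemxAl mxtraceZ. Qed.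

Lemma frobZr p q a (X Y : 'M[C]_(p, q)) : frob X (a *: Y) = a^* * frob X Y.
Proof. by rewrite frobC frobZl rmorphM /= -frobC. Qed.

Lemma frob_dotmx p q (X Y : 'M[C]_(p, q)) : frob X Y = dotmx (mxvec X) (mxvec Y).
Proof.
rewrite dotmxE frobE !mxE (reindex _ (curry_mxvec_bij _ _)) /= pair_big /=.
by apply: eq_bigr => -[i j] _; rewrite !mxE !mxvecE.
Qed.

Definition frob2 p q (X : 'M[C]_(p, q)) : R := complex.Re (frob X X).

Lemma frob2E p q (X : 'M[C]_(p, q)) : frob X X = (frob2 X)%:C%C.
Proof.
rewrite /frob2 RRe_real // ger0_real // frobE.
by apply: sumr_ge0 => i _; apply: sumr_ge0 => j _; exact: mul_conjC_ge0.
Qed.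

Lemma frob2_ge0 p q (X : 'M[C]_(p, q)) : 0 <= frob2 X.
Proof. by rewrite -lecR -frob2E frob_dotmx dnorm_ge0. Qed.

Lemma frob2_eq0 p q (X : 'M[C]_(p, q)) : (frob2 X == 0) = (X == 0).
Proof. by rewrite -(inj_eq (@complexI _)) -frob2E frob_dotmx dnorm_eq0 mxvec_eq0. Qed.

Lemma frob20 p q : frob2 (0 : 'M[C]_(p, q)) = 0.
Proof. by apply/eqP; rewrite frob2_eq0. Qed.

Lemma frob2_delta p q (i : 'I_p) (j : 'I_q) : frob2 (delta_mx i j : 'M[C]_(p, q)) = 1.
Proof.
apply: complexI; rewrite -frob2E frobE (bigD1 i) //= [X in _ + X]big1 => [|a /negPf ai].
  rewrite (bigD1 j) //= big1 => [|b /negPf bj]; last by rewrite mxE bj andbF mul0r.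
  by rewrite mxE !eqxx mul1r conjC1 !addr0.
by apply: big1 => b _; rewrite mxE ai mul0r.
Qed.

Lemma cabsE (z : C) : (cabs z)%:C%C = `|z|.
Proof. by case: z. Qed.

Lemma cabs_ge0 (z : C) : 0 <= cabs z.
Proof. by case: z => a b; rewrite /cabs /= sqrtr_ge0. Qed.

Lemma cabs_real (t : R) : 0 <= t -> cabs t%:C%C = t.
Proof. by move=> t0; rewrite /cabs /= expr0n /= addr0 sqrtr_sqr ger0_norm. Qed.

Lemma frob_CauchySchwarz p q (X Y : 'M[C]_(p, q)) :
  cabs (frob X Y) ^+ 2 <= frob2 X * frob2 Y.
Proof.
rewrite -lecR rmorphXn rmorphM /= cabsE -!frob2E !frob_dotmx.
exact: (CauchySchwarz (@dotmx C (p * q)) _ _).1.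
Qed.

Lemma conjC_real (t : R) : (t%:C%C)^* = t%:C%C.
Proof. exact: conjc_real. Qed.

Lemma frob2Z_real p q (c : R) (X : 'M[C]_(p, q)) :
  frob2 (c%:C%C *: X) = c ^+ 2 * frob2 X.
Proof.
apply: complexI; rewrite -frob2E frobZl frobZr conjC_real frob2E.
by rewrite mulrA -!rmorphM expr2.
Qed.

Definition normalize p q (X : 'M[C]_(p, q)) : 'M[C]_(p, q) :=
  (Num.sqrt (frob2 X))^-1%:C%C *: X.

Lemma frob2_mul_normalize p q r (A : 'M[C]_(p, q)) (X : 'M[C]_(q, r)) :
  frob2 (A *m normalize X) = frob2 (A *m X) / frob2 X.
Proof.
by rewrite -scalemxAr frob2Z_real exprVn sqr_sqrtr ?frob2_ge0 // mulrC.
Qed.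

Lemma frob2_normalize p q (X : 'M[C]_(p, q)) : X != 0 -> frob2 (normalize X) = 1.
Proof.
by rewrite -frob2_eq0 => X0; rewrite -[normalize X]mul1mx frob2_mul_normalize mul1mx divff.
Qed.

Lemma frob_normalize p q (X : 'M[C]_(p, q)) :
  frob X (normalize X) = (Num.sqrt (frob2 X))%:C%C.
Proof.
rewrite frobZr conjC_real frob2E -rmorphM /=.
have [s0|s_ne0] := eqVneq (Num.sqrt (frob2 X)) 0; first by rewrite s0 invr0 mul0r.
by rewrite -{2}[frob2 X]sqr_sqrtr ?frob2_ge0 // expr2 mulKf.
Qed.

Lemma frob2_mulmx_unitary p q (X : 'M[C]_(p, q)) (U : 'M[C]_q) :
  U \is unitarymx -> frob2 (X *m U) = frob2 X.
Proof. by move=> /unitarymxP U1; rewrite /frob2 frob_mulmxr -mulmxA U1 mulmx1. Qed.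

Definition setdiag_mx p (S : {set 'I_p}) : 'M[C]_p :=
  \matrix_(i, j) ((i == j) && (i \in S))%:R.

Lemma mulmx_setdiag p q (A : 'M[C]_(q, p)) S i j :
  (A *m setdiag_mx S) i j = A i j * (j \in S)%:R.
Proof.
rewrite mxE (bigD1 j) //= big1 ?addr0; first by rewrite mxE eqxx.
by move=> k /negPf nkj; rewrite mxE nkj mulr0.
Qed.

Lemma setdiag_trmxC p (S : {set 'I_p}) : (setdiag_mx S)^t* = setdiag_mx S.
Proof. by apply/matrixP => i j; rewrite !mxE conjC_nat eq_sym; case: eqP => [->|]. Qed.

Lemma setdiag_idem p (S : {set 'I_p}) : setdiag_mx S *m setdiag_mx S = setdiag_mx S.
Proof.
apply/matrixP => i j; rewrite mulmx_setdiag mxE.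
by case: eqP => [->|]; case: (j \in S); rewrite ?mulr1 ?mulr0 ?andbF.
Qed.

Lemma rank_setdiag p (S : {set 'I_p}) : (\rank (setdiag_mx S) <= #|S|)%N.
Proof.
have -> : setdiag_mx S = \sum_(j in S) delta_mx j j.
  apply/matrixP => a b; rewrite summxE mxE.
  under eq_bigr do rewrite mxE.
  case: eqP => [<-|/eqP nab] /=.
    under eq_bigr do rewrite andbb.
    case: (boolP (a \in S)) => aS.
      rewrite (bigD1 a) //= eqxx big1 ?addr0 // => j /andP[_ ja].
      by rewrite eq_sym (negPf ja).
    by rewrite big1 // => j jS; case: eqP => // aj; rewrite aj jS in aS.
  by rewrite big1 // => j _; case: eqP => // <-; rewrite eq_sym (negPf nab).
rewrite -sum1_card.
elim/big_ind2: _ => [|A1 k1 A2 k2 h1 h2|j _]; first by rewrite mxrank0.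
  exact: leq_trans (mxrank_add _ _) (leq_add h1 h2).
by rewrite mxrank_delta.
Qed.

Definition colnorm2 p q (W : 'M[C]_(p, q)) (j : 'I_q) : R := \sum_i cabs (W i j) ^+ 2.

Lemma colnorm2_ge0 p q (W : 'M[C]_(p, q)) j : 0 <= colnorm2 W j.
Proof. by apply: sumr_ge0 => i _; rewrite exprn_ge0 // cabs_ge0. Qed.

Lemma colnorm2E p q (W : 'M[C]_(p, q)) j :
  (colnorm2 W j)%:C%C = \sum_i W i j * (W i j)^*.
Proof. by rewrite rmorph_sum; apply: eq_bigr => i _; rewrite rmorphXn /= cabsE sqr_normc. Qed.

Lemma frob2_cols p q (W : 'M[C]_(p, q)) : frob2 W = \sum_j colnorm2 W j.
Proof.
apply: complexI; rewrite -frob2E frobE exchange_big rmorph_sum /=.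
by apply: eq_bigr => j _; rewrite colnorm2E.
Qed.

Lemma frob2_mul_setdiag p q (W : 'M[C]_(p, q)) S :
  frob2 (W *m setdiag_mx S) = \sum_(j in S) colnorm2 W j.
Proof.
rewrite frob2_cols [RHS]big_mkcond /=; apply: eq_bigr => j _; rewrite /colnorm2.
case: (boolP (j \in S)) => jS.
  by apply: eq_bigr => i _; rewrite mulmx_setdiag jS mulr1.
by rewrite big1 // => i _; rewrite mulmx_setdiag (negPf jS) mulr0 (cabs_real (lexx 0)) expr0n.
Qed.

Lemma frob_le_cols p q (X Y : 'M[C]_(p, q)) (V : 'M[C]_q) (Q : {set 'I_q}) :
  V \is unitarymx -> Y *m V *m setdiag_mx Q = Y *m V ->
  cabs (frob Y X) ^+ 2 <= frob2 Y * \sum_(j in Q) colnorm2 (X *m V) j.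
Proof.
move=> V_unit YVQ.
have -> : frob Y X = frob (Y *m V *m setdiag_mx Q) (X *m V).
  by rewrite YVQ frob_mulmxr -mulmxA (unitarymxP V_unit) mulmx1.
rewrite frob_mulmxr setdiag_trmxC -frob2_mul_setdiag -(frob2_mulmx_unitary Y V_unit).
exact: frob_CauchySchwarz.
Qed.

Local Notation "B ^!" :=
  (orthomx Num.conj (mx_of_hermitian (hermitian1mx _)) B) : matrix_set_scope.

(* The rows of schmidt_complete Y are an orthonormal basis whose last rows
   span the orthogonal complement of the row space of Y. *)
Lemma exists_unitary_col_support p q (Y : 'M[C]_(p, q)) :
  exists2 V : 'M[C]_q, V \is unitarymx &
    exists2 Q : {set 'I_q}, #|Q| = \rank Y & Y *m V *m setdiag_mx Q = Y *m V.
Proof.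
pose B := schmidt (row_base Y^!%MS).
have YB : Y *m B^t* = 0.
  have : (B <= Y^!)%MS by rewrite eqmx_schmidt_free ?row_base_free // eq_row_base.
  move/orthomx1P => BY; rewrite -[Y *m _]trmxCK trmxC_mul trmxCK BY.
  by apply/matrixP => a b; rewrite !mxE conjC0.
suff gen r (U : 'M[C]_(r, q)) : r = q -> U \is unitarymx ->
    (forall i (j : 'I_r), (\rank Y <= j)%N -> (Y *m U^t*) i j = 0) ->
    exists2 V : 'M[C]_q, V \is unitarymx &
      exists2 Q : {set 'I_q}, #|Q| = \rank Y & Y *m V *m setdiag_mx Q = Y *m V.
  apply: (gen _ _ (add_rank_ortho Y) (schmidt_complete_unitarymx Y)) => i j.
  rewrite /schmidt_complete tr_col_mx map_row_mx mul_mx_row YB.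
  case: (split_ordP j) => j' -> le_rj; last by rewrite row_mxEr mxE.
  by move: (ltn_ord j'); rewrite ltnNge le_rj.
move=> e; subst r; move=> U_unit YU.
exists (U^t*); first by rewrite trmxC_unitary.
have le_rq := rank_leq_col Y.
exists [set widen_ord le_rq j | j : 'I_(\rank Y)].
  by rewrite card_imset ?card_ord // => a b /(congr1 val) /= /val_inj.
apply/matrixP => i j; rewrite mulmx_setdiag.
case: (boolP (j \in _)) => jQ; first by rewrite mulr1.
rewrite mulr0 YU //; apply: contraNT jQ; rewrite -ltnNge => lt_jr.
by apply/imsetP; exists (Ordinal lt_jr) => //; apply: val_inj.
Qed.

Section Vectors.
Variables n m : nat.

Lemma adjE p q (A : 'M[C]_(p, q)) : adj A = A^t*.
Proof. by apply/matrixP => i j; rewrite !mxE. Qed.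

Lemma entry_frob d (A : 'M[C]_d) (v w : 'cV[C]_d) :
  (adj w *m A *m v) 0 0 = frob (A *m v) w.
Proof. by rewrite /frob adjE -mulmxA mxtrace_mulC trace_mx11. Qed.

Lemma unit_vecP d (v : 'cV[C]_d) : unit_vec v <-> frob2 v = 1.
Proof.
rewrite /unit_vec /dotC -[adj v]mulmx1 entry_frob mul1mx frob2E.
by split => [/complexI|->].
Qed.

Lemma frob_coef_mx (v w : 'cV[C]_(n * m)) : frob (coef_mx v) (coef_mx w) = frob v w.
Proof.
rewrite !frobE (reindex _ (curry_mxvec_bij _ _)) /= pair_big /=.
by apply: eq_bigr => -[i j] _; rewrite big_ord1 !mxE.
Qed.

Lemma frob2_coef_mx (v : 'cV[C]_(n * m)) : frob2 (coef_mx v) = frob2 v.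
Proof. by rewrite /frob2 frob_coef_mx. Qed.

Definition coef_vec (X : 'M[C]_(n, m)) : 'cV[C]_(n * m) := (mxvec X)^T.

Lemma coef_vecK (X : 'M[C]_(n, m)) : coef_mx (coef_vec X) = X.
Proof. by rewrite /coef_mx /coef_vec trmxK mxvecK. Qed.

Lemma SR_scale a (v : 'cV[C]_(n * m)) : (SR (a *: v) <= SR v)%N.
Proof. by rewrite /SR /coef_mx !linearZ /= -mul_mx_scalar mxrankM_maxl. Qed.

End Vectors.

Section Projection.
Variables (d : nat) (P : 'M[C]_d).
Hypotheses (PP : P *m P = P) (Pt : P^t* = P).

Lemma frob_proj_r (v w : 'cV[C]_d) : frob v (P *m w) = frob (P *m v) w.
Proof. by rewrite frob_mulmxl Pt. Qed.

Lemma frob_proj (v w : 'cV[C]_d) : frob (P *m v) w = frob (P *m v) (P *m w).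
Proof. by rewrite frob_proj_r mulmxA PP. Qed.

Lemma frob2_proj_le (v : 'cV[C]_d) : frob2 (P *m v) <= frob2 v.
Proof.
have := frob_CauchySchwarz (P *m v) v.
rewrite frob_proj frob2E cabs_real ?frob2_ge0 //.
have := frob2_ge0 (P *m v); have := frob2_ge0 v; nra.
Qed.

Lemma proj_entry_sq (v w : 'cV[C]_d) :
  cabs ((adj w *m P *m v) 0 0) ^+ 2 <= frob2 (P *m v) * frob2 (P *m w).
Proof. by rewrite entry_frob frob_proj frob_CauchySchwarz. Qed.

Lemma proj_entry_diag (v : 'cV[C]_d) : cabs ((adj v *m P *m v) 0 0) = frob2 (P *m v).
Proof. by rewrite entry_frob frob_proj frob2E cabs_real ?frob2_ge0. Qed.

Lemma exists_unit_fixed : P != 0 -> exists2 x : 'cV[C]_d, unit_vec x & P *m x = x.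
Proof.
move=> P0; have [j Pj0] : exists j, col j P != 0.
  apply/existsP; apply: contraNT P0; rewrite negb_exists => /forallP Pcol.
  apply/eqP/matrixP => a b; have := Pcol b.
  by rewrite negbK => /eqP/matrixP/(_ a 0); rewrite !mxE.
exists (normalize (col j P)); first exact/unit_vecP/frob2_normalize.
by rewrite -scalemxAr colE mulmxA PP.
Qed.

End Projection.

End Frobenius.

Section SchmidtNorm.
Variables (R : realType) (n m : nat) (P : 'M[R[i]]_(n * m)).
Hypotheses (PP : P *m P = P) (Pt : P^t* = P).
Local Notation C := R[i].

Definition normS_set j : set R := [set r : R | exists (v w : 'cV[C]_(n * m)),
  [/\ unit_vec v, unit_vec w, (SR v <= j)%N, (SR w <= j)%N &
      r = cabs ((adj w *m P *m v) 0 0)]].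

Lemma normS_set_bound j r : normS_set j r -> 0 <= r <= 1.
Proof.
move=> [v [w [/unit_vecP v1 /unit_vecP w1 _ _ ->]]]; rewrite cabs_ge0 /=.
have := proj_entry_sq PP Pt v w; have := cabs_ge0 ((adj w *m P *m v) 0 0).
have := frob2_proj_le PP Pt v; have := frob2_proj_le PP Pt w.
have := frob2_ge0 (P *m v); have := frob2_ge0 (P *m w).
rewrite v1 w1; nra.
Qed.

Lemma normS_ub j r : normS_set j r -> r <= normS j P.
Proof.
move=> Er; have Esup : has_sup (normS_set j).
  by split; [exists r | exists 1 => s /normS_set_bound /andP[]].
exact: sup_upper_bound Esup r Er.
Qed.

Lemma normS_ge0 j : 0 <= normS j P.
Proof.
have [[r Er]|E0] := pselect ((normS_set j !=set0)%classic); last first.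
  suff E0' : normS_set j = classical_sets.set0 by rewrite /normS -/(normS_set j) E0' sup0.
  by apply/funext => r; apply/propext; split => // Er; apply: E0; exists r.
by apply: le_trans (normS_ub Er); case/andP: (normS_set_bound Er).
Qed.

Lemma normS_set_neq0 j : (0 < n)%N -> (0 < m)%N -> (0 < j)%N ->
  (normS_set j !=set0)%classic.
Proof.
move=> n_gt0 m_gt0 j_gt0.
pose e : 'cV[C]_(n * m) := coef_vec (delta_mx (Ordinal n_gt0) (Ordinal m_gt0)).
have e1 : unit_vec e by apply/unit_vecP; rewrite -frob2_coef_mx coef_vecK frob2_delta.
have SRe : (SR e <= j)%N by rewrite /SR coef_vecK mxrank_delta.
by exists (cabs ((adj e *m P *m e) 0 0)), e, e.
Qed.

Lemma normS_ge_compress k (x : 'cV[C]_(n * m)) (M : 'M[C]_m) :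
  unit_vec x -> P *m x = x -> M *m M = M -> M^t* = M -> (\rank M <= k)%N ->
  frob2 (coef_mx x *m M) <= normS k P.
Proof.
move=> /unit_vecP x1 Px MM Mt rM.
set X := coef_mx x; set Z := X *m M.
have [Z0|Z_ne0] := eqVneq Z 0.
  by rewrite Z0 frob20 normS_ge0.
set v0 := coef_vec Z.
have v0_ne0 : v0 != 0.
  by apply: contra_neq Z_ne0 => v00; rewrite -(coef_vecK Z) -/v0 v00 /coef_mx trmx0 linear0.
have v1 : unit_vec (normalize v0) by apply/unit_vecP; exact: frob2_normalize.
have SRv : (SR (normalize v0) <= k)%N.
  apply: leq_trans (SR_scale _ _) _; rewrite /SR coef_vecK.
  exact: leq_trans (mxrankM_maxr _ _) rM.
apply: le_trans (normS_ub (r := cabs ((adj (normalize v0) *m P *m normalize v0) 0 0)) _);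
  last by exists (normalize v0), (normalize v0).
rewrite proj_entry_diag // frob2_mul_normalize -[frob2 v0]frob2_coef_mx coef_vecK.
(* <P v0, x> = <Z, X> = |Z|^2 since M is an orthogonal projection *)
have PvX : frob (P *m v0) x = (frob2 Z)%:C%C.
  rewrite -frob_proj_r // Px -frob_coef_mx coef_vecK /Z -{1}MM mulmxA.
  by rewrite frob_mulmxr Mt frob2E.
have := frob_CauchySchwarz (P *m v0) x; rewrite PvX cabs_real ?frob2_ge0 // x1 mulr1.
have Z_gt0 : 0 < frob2 Z by rewrite lt_def frob2_eq0 Z_ne0 frob2_ge0.
by rewrite ler_pdivlMr // -expr2.
Qed.

Lemma normS_ge_cols k (x : 'cV[C]_(n * m)) (V : 'M[C]_m) (S : {set 'I_m}) :
  unit_vec x -> P *m x = x -> V \is unitarymx -> (#|S| <= k)%N ->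
  \sum_(j in S) colnorm2 (coef_mx x *m V) j <= normS k P.
Proof.
move=> x1 Px V_unit cardS.
have Vt_unit : V^t* \is unitarymx by rewrite trmxC_unitary.
have VtV : V^t* *m V = 1%:M by rewrite -[X in _ *m X]trmxCK; exact/unitarymxP.
pose M := V *m setdiag_mx S *m V^t*.
have MM : M *m M = M.
  by rewrite /M !mulmxA -(mulmxA _ (V^t*)) VtV mulmx1 -(mulmxA V) setdiag_idem.
have Mt : M^t* = M by rewrite /M !trmxC_mul trmxCK setdiag_trmxC mulmxA.
have rM : (\rank M <= k)%N.
  apply: leq_trans (mxrankM_maxl _ _) _; apply: leq_trans (mxrankM_maxr _ _) _.
  exact: leq_trans (rank_setdiag S) cardS.
apply: le_trans (normS_ge_compress x1 Px MM Mt rM).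
by rewrite /M !mulmxA frob2_mulmx_unitary // frob2_mul_setdiag.
Qed.

Variables h k : nat.
Hypotheses (m_ge2 : (2 <= m)%N) (h_gt0 : (0 < h)%N) (le_hk : (h <= k)%N) (le_km : (k <= m)%N).
Local Notation t := ((k - h)%:R / (m - 1)%:R : R).

Lemma mix_ge0 : 0 <= t.
Proof. by rewrite divr_ge0 ?ler0n. Qed.

Lemma mix_le1 : t <= 1.
Proof. by rewrite ler_pdivrMr ?mul1r ?ler_nat ?ltr0n ?subn_gt0 //; lia. Qed.

Lemma normS_ge_overlap (x : 'cV[C]_(n * m)) (Y : 'M[C]_(n, m)) :
  unit_vec x -> P *m x = x -> frob2 Y = 1 -> (\rank Y <= h)%N ->
  (1 - t) * cabs (frob Y (coef_mx x)) ^+ 2 + t <= normS k P.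
Proof.
move=> x1 Px Y1 rY.
set X := coef_mx x.
have [V V_unit [Q cardQ YVQ]] := exists_unitary_col_support Y.
set W := X *m V.
set s := \sum_(j in Q) colnorm2 W j.
have overlap : cabs (frob Y X) ^+ 2 <= s by rewrite -[s]mul1r -Y1; exact: frob_le_cols.
have rest : \sum_(j in ~: Q) colnorm2 W j = 1 - s.
  have := frob2_mulmx_unitary X V_unit.
  rewrite frob2_coef_mx (unit_vecP _).1 // frob2_cols (bigID (mem Q)) /= -/W -/s.
  by move <-; rewrite addrC addrK; apply: eq_bigl => j; rewrite inE.
have rY_gt0 : (0 < \rank Y)%N.
  rewrite lt0n mxrank_eq0 -frob2_eq0 Y1; exact: oner_neq0.
have cardQC : #|~: Q| = (m - \rank Y)%N.
  apply/eqP; rewrite -(eqn_add2l (\rank Y)) subnKC ?rank_leq_col // -{1}cardQ cardsC.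
  exact/eqP/card_ord.
have le_l : (k - h <= #|~: Q|)%N by rewrite cardQC; lia.
have [T TQ [cardT avgT]] := exists_subset_ge_avg (colnorm2 W) le_l.
set u := \sum_(j in T) colnorm2 W j in avgT.
have QT : [disjoint Q & T] by rewrite disjoint_sym finset.disjoints_subset.
have cardS : (#|Q :|: T| <= k)%N.
  by rewrite cardsU cardQ cardT (leq_trans (leq_subr _ _)) // -{2}(subnKC le_hk) leq_add2r.
have sumS : \sum_(j in Q :|: T) colnorm2 W j = s + u.
  by rewrite (eq_bigl [predU Q & T]) ?bigU // => j; rewrite !inE.
have := normS_ge_cols x1 Px V_unit cardS; rewrite -/X -/W sumS => s_u_le.
have tu : t * (1 - s) <= u.
  have u_ge0 : 0 <= u by apply: sumr_ge0 => j _; exact: colnorm2_ge0.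
  rewrite mulrAC ler_pdivrMr ?ltr0n ?subn_gt0 // -rest.
  by rewrite (le_trans avgT) // mulrC ler_wpM2l // ler_nat cardQC leq_sub2l.
have := mix_ge0; have := mix_le1; have := sqr_ge0 (cabs (frob Y X)); nra.
Qed.

Lemma normS_ge_proj_vec (y : 'cV[C]_(n * m)) : P != 0 -> unit_vec y -> (SR y <= h)%N ->
  (1 - t) * frob2 (P *m y) + t <= normS k P.
Proof.
move=> P0 y1 SRy.
have Y1 : frob2 (coef_mx y) = 1 by rewrite frob2_coef_mx; exact/unit_vecP.
have [Py0|Py_ne0] := eqVneq (P *m y) 0.
  have [x0 x0_1 Px0] := exists_unit_fixed PP P0.
  have := normS_ge_overlap x0_1 Px0 Y1 SRy.
  rewrite Py0 frob20 mulr0 add0r.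
  by apply: le_trans; rewrite lerDr mulr_ge0 ?sqr_ge0 // subr_ge0 mix_le1.
set x := normalize (P *m y).
have x1 : unit_vec x by apply/unit_vecP; exact: frob2_normalize.
have Px : P *m x = x by rewrite -scalemxAr mulmxA PP.
suff <- : cabs (frob (coef_mx y) (coef_mx x)) ^+ 2 = frob2 (P *m y).
  exact: normS_ge_overlap x1 Px Y1 SRy.
rewrite frob_coef_mx -Px frob_proj_r // frob_normalize.
by rewrite cabs_real ?sqrtr_ge0 // sqr_sqrtr // frob2_ge0.
Qed.

Lemma normS_ge_entry (v w : 'cV[C]_(n * m)) : P != 0 ->
  unit_vec v -> unit_vec w -> (SR v <= h)%N -> (SR w <= h)%N ->
  (1 - t) * cabs ((adj w *m P *m v) 0 0) + t <= normS k P.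
Proof.
move=> P0 v1 w1 SRv SRw.
have := proj_entry_sq PP Pt v w; have := cabs_ge0 ((adj w *m P *m v) 0 0).
have := normS_ge_proj_vec P0 v1 SRv; have := normS_ge_proj_vec P0 w1 SRw.
have := frob2_ge0 (P *m v); have := frob2_ge0 (P *m w); have := mix_le1.
set r := cabs _; set a := frob2 (P *m v); set b := frob2 (P *m w).
(* r^2 <= a b gives r <= max(a, b), and both a and b satisfy the bound *)
move=> t_le1 b_ge0 a_ge0 bnd_b bnd_a r_ge0 r_sq.
have [le_ab|lt_ba] := lerP a b; [have : r <= b by nra | have : r <= a by nra]; nra.
Qed.

End SchmidtNorm.

Theorem corollary4p16 (R : realType) (n m h k : nat)
  (P : 'M[R[i]]_(n * m)) :
  (2 <= m)%N -> (m <= n)%N -> (1 <= h)%N -> (h <= k)%N -> (k <= m)%N ->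
  orth_proj P -> P != 0 ->
  normS k P >=
    (1 - (k - h)%:R / (m - 1)%:R) * normS h P + (k - h)%:R / (m - 1)%:R.
Proof.
move=> m_ge2 le_mn h_gt0 le_hk le_km [PP adjP] P0.
have Pt : P^t* = P by rewrite -adjE.
have m_gt0 : (0 < m)%N by apply: leq_trans m_ge2.
apply: sup_affine_le.
- exact: normS_set_neq0 (leq_trans m_gt0 le_mn) m_gt0 h_gt0.
- by rewrite subr_ge0 mix_le1.
- by move=> r [v [w [v1 w1 SRv SRw ->]]]; exact: normS_ge_entry.
Qed.
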